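(* Let $T$ be a non-empty set and $U=(U(t))_{t\in T}$ a stochastic process whose marginals $U(t)$ are all uniform on $(0,1)$ (with $\inf_{t\in S}U(t)$ and $\sup_{t\in S}U(t)$ measurable for the subsets $S$ below). Suppose there exist a finite covering $T=\bigcup_{j=1}^NT_j$ and $\lambda>1$ such that for every $j=1,\ldots,N$, $$\liminf_{x\downarrow0}\mathbb{P}\Big[\sup_{t\in T_j}U(t)\le\lambda x\ \Big|\ \inf_{t\in T_j}U(t)\le x\Big]>0.$$ Then $\mathbb{P}[\inf_{t\in T}U(t)\le x]=O(x)$ as $x\downarrow0$. *)

From HB Require Import structures.
From mathcomp Require Import all_boot all_order all_algebra.
From mathcomp Require Import all_classical all_reals all_analysis measurable_realfun.
Set Implicit Arguments. Unset Strict Implicit. Unset Printing Implicit Defensive.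
Import Order.TTheory GRing.Theory Num.Theory.
Import numFieldNormedType.Exports.
Local Open Scope classical_set_scope.
Local Open Scope ring_scope.

Definition pinf {Omega T : Type} {R : realType} (U : T -> Omega -> R) (S : set T)
  (w : Omega) : \bar R := ereal_inf [set (U t w)%:E | t in S].
Definition psup {Omega T : Type} {R : realType} (U : T -> Omega -> R) (S : set T)
  (w : Omega) : \bar R := ereal_sup [set (U t w)%:E | t in S].

(* elementary conditional probability P[A | B] = P(A n B) / P(B)
   (with the MathComp convention r / 0 = 0) *)
Definition cond_prob {d} {Omega : measurableType d} {R : realType}
  (P : probability Omega R) (A B : set Omega) : R :=
  fine (P (A `&` B)) / fine (P B).

Definition uniform01 {d} {Omega : measurableType d} {R : realType}
  (P : probability Omega R) (X : Omega -> R) : Prop :=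
  measurable_fun setT X /\
  forall x : R, P [set w | X w <= x] = (Num.min (Num.max x 0) 1)%:E.

From HB Require Import structures.
From mathcomp Require Import all_boot all_order all_algebra.
From mathcomp Require Import all_classical all_reals all_analysis measurable_realfun.
From mathcomp Require Import ring.
Import Order.TTheory GRing.Theory Num.Theory.
Import numFieldNormedType.Exports.
Local Open Scope classical_set_scope.
Local Open Scope ring_scope.

(* For each piece T_j of the cover, P[inf_{T_j} U <= y] is at most
   P[sup_{T_j} U <= lambda y, inf_{T_j} U <= y] / c_j, and the latter event is
   contained in [U(t) <= lambda y] for any t in T_j, so it has probability at
   most lambda y by uniformity. Since inf_T U <= x forces inf_{T_j} U < 2x for
   some j, a union bound gives P[inf_T U <= x] <= (sum_j 2 lambda / c_j) x. *)

Section pathwise_extrema.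
Context {Omega T : Type} {R : realType} (U : T -> Omega -> R).

Lemma pinf_lbound (S : set T) t w : S t -> (pinf U S w <= (U t w)%:E)%E.
Proof. by move=> St; apply: ereal_inf_lbound; exists t. Qed.

Lemma psup_ubound (S : set T) t w : S t -> ((U t w)%:E <= psup U S w)%E.
Proof. by move=> St; apply: ereal_sup_ubound; exists t. Qed.

Lemma pinf_set0 w : pinf U set0 w = +oo%E.
Proof. by rewrite /pinf image_set0 ereal_inf0. Qed.

Lemma pinf_cover_lt {I : Type} {Tj : I -> set T} :
  \bigcup_(j in [set: I]) Tj j = [set: T] ->
  forall w y, (pinf U [set: T] w < y)%E -> exists j, (pinf U (Tj j) w < y)%E.
Proof.
move=> cover w y /ereal_inf_lt[_ [t _ <-] Uty].
have [j _ Tjt] : (\bigcup_(j in [set: I]) Tj j) t by rewrite cover.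
by exists j; apply: le_lt_trans Uty; exact: pinf_lbound.
Qed.

End pathwise_extrema.

Section probability_bounds.
Context {d} {Omega : measurableType d} {R : realType} (P : probability Omega R).

Lemma measurable_sublevel {f : Omega -> \bar R} (y : \bar R) :
  measurable_fun [set: Omega] f -> measurable [set w | (f w <= y)%E].
Proof.
by move=> mf; rewrite -[X in measurable X]setTI; exact: emeasurable_fun_infty_c.
Qed.

Lemma uniform01_le (X : Omega -> R) (y : R) :
  uniform01 P X -> 0 <= y -> (P [set w | (X w <= y)%R] <= y%:E)%E.
Proof.
by move=> [_ cdfX] y_ge0; rewrite cdfX lee_fin ge_min ge_max lexx y_ge0.
Qed.

Lemma cond_prob_lt_measure_le {A B : set Omega} {c : R} :
  measurable B -> 0 < c -> c < cond_prob P A B ->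
  (P B <= (fine (P (A `&` B)) / c)%:E)%E.
Proof.
move=> mB c_gt0; rewrite /cond_prob.
have [->|PB_neq0] := eqVneq (fine (P B)) 0.
  by rewrite invr0 mulr0 => /(lt_trans c_gt0); rewrite ltxx.
have PB_gt0 : 0 < fine (P B) by rewrite lt0r PB_neq0 fine_ge0.
rewrite ltr_pdivlMr // => cPB_lt.
rewrite -(fineK (fin_num_measure P B mB)) lee_fin ler_pdivlMr // mulrC.
exact: ltW.
Qed.

Context {T : Type} (U : T -> Omega -> R).

(* The infimum over [T] need not be attained, hence the relaxation from [x]
   to some [y > x]. *)
Lemma pinf_sublevel_le_sum {I : finType} (Tj : I -> set T) (x y : R) :
  \bigcup_(j in [set: I]) Tj j = [set: T] -> x < y ->
  measurable_fun [set: Omega] (pinf U [set: T]) ->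
  (forall j, measurable_fun [set: Omega] (pinf U (Tj j))) ->
  (P [set w | (pinf U [set: T] w <= x%:E)%E] <=
   \sum_(j \in [set: I]) P [set w | (pinf U (Tj j) w <= y%:E)%E])%E.
Proof.
move=> cover x_lt_y minf minfj.
apply: content_sub_fsum => //; first exact: finite_finset.
- by move=> j _; exact: measurable_sublevel.
- exact: measurable_sublevel.
move=> w /= inf_le; have [|j inf_lt] := pinf_cover_lt U cover w y%:E.
  by apply: le_lt_trans inf_le _; rewrite lte_fin.
by exists j => //; exact: ltW.
Qed.

Hypothesis U_uniform : forall t, uniform01 P (U t).

Lemma pinf_sublevel_le (S : set T) (lambda c y : R) :
  measurable_fun [set: Omega] (pinf U S) ->
  measurable_fun [set: Omega] (psup U S) ->
  0 < c -> 0 <= lambda * y ->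
  c < cond_prob P [set w | (psup U S w <= (lambda * y)%:E)%E]
                  [set w | (pinf U S w <= y%:E)%E] ->
  (P [set w | (pinf U S w <= y%:E)%E] <= (lambda * y / c)%:E)%E.
Proof.
move=> minf msup c_gt0 ly_ge0.
set A := [set w | (pinf U S w <= y%:E)%E].
set B := [set w | (psup U S w <= (lambda * y)%:E)%E] => c_lt.
have [S0|/set0P[t St]] := eqVneq S set0.
  have -> : A = set0.
    by apply/seteqP; split => // w; rewrite /A /= S0 pinf_set0 leye_eq.
  by rewrite measure0 lee_fin divr_ge0 // ltW.
have mA : measurable A by exact: measurable_sublevel.
have mB : measurable B by exact: measurable_sublevel.
have mBA : measurable (B `&` A) by exact: measurableI.
apply: (le_trans (cond_prob_lt_measure_le mA c_gt0 c_lt)).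
rewrite lee_fin ler_pM2r ?invr_gt0 //.
have BA_Ut : B `&` A `<=` [set w | (U t w <= lambda * y)%R].
  by move=> w [Bw _]; rewrite /= -lee_fin (le_trans _ Bw) // psup_ubound.
have mUt : measurable [set w | (U t w <= lambda * y)%R].
  apply: (@measurable_sublevel (EFin \o U t) (lambda * y)%:E).
  by apply/measurable_EFinP; exact: (U_uniform t).1.
rewrite -lee_fin fineK ?(fin_num_measure P _ mBA) //.
apply: le_trans (uniform01_le _ _ (U_uniform t) ly_ge0).
exact: le_measure (mem_set mBA) (mem_set mUt) BA_Ut.
Qed.

End probability_bounds.

Lemma near_at_right0_scale {R : realType} {Q : R -> Prop} {k : R} : 0 < k ->
  (\forall x \near 0^'+, Q x) -> \forall x \near 0^'+, Q (k * x).
Proof.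
rewrite !near_withinE => k_gt0 /nbhs_ballP[e /= e_gt0 Qe].
apply/nbhs_ballP; exists (e / k) => [|x /= x_near x_gt0]; first exact: divr_gt0.
apply: Qe; last exact: mulr_gt0.
move: x_near; rewrite /ball /= !sub0r !normrN normrM (gtr0_norm k_gt0).
by rewrite ltr_pdivlMr // mulrC.
Qed.

Theorem lemma1 (d : measure_display) (Omega : measurableType d) (R : realType)
  (P : probability Omega R) (T : Type) (U : T -> Omega -> R)
  (N : nat) (Tj : 'I_N -> set T) (lambda : R) :
  [set: T] !=set0 ->
  (forall t, uniform01 P (U t)) ->
  \bigcup_(j in [set: 'I_N]) Tj j = [set: T] ->
  1 < lambda ->
  measurable_fun [set: Omega] (fun w : Omega => pinf U [set: T] w) ->
  (forall j, measurable_fun [set: Omega] (fun w : Omega => pinf U (Tj j) w)) ->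
  (forall j, measurable_fun [set: Omega] (fun w : Omega => psup U (Tj j) w)) ->
  (forall j, exists c : R, 0 < c /\
     \forall x \near 0^'+,
       c < cond_prob P [set w | (psup U (Tj j) w <= (lambda * x)%:E)%E]
                       [set w | (pinf U (Tj j) w <= x%:E)%E]) ->
  exists C : R, \forall x \near 0^'+,
    (P [set w | pinf U [set: T] w <= x%:E] <= (C * x)%:E)%E.
Proof.
move=> _ U_uniform cover lambda_gt1 minf minfj msupj /choice[c /all_and2[c_gt0 c_lt]].
have c_lt2 : \forall x \near 0^'+, forall j, c j < cond_prob P
    [set w | (psup U (Tj j) w <= (lambda * (2 * x))%:E)%E]
    [set w | (pinf U (Tj j) w <= (2 * x)%:E)%E].
  by apply: filter_forall => j; exact: near_at_right0_scale (ltr0Sn R 1) (c_lt j).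
exists (\sum_(j \in [set: 'I_N]) 2 * lambda / c j).
apply: filterS2 (nbhs_right_gt 0) c_lt2 => x x_gt0 c_ltx.
have lambda_gt0 : 0 < lambda := lt_trans ltr01 lambda_gt1.
have x_lt2x : x < 2 * x by rewrite ltr_pMl // ltr1n.
apply: (le_trans (pinf_sublevel_le_sum P U Tj x (2 * x) cover x_lt2x minf minfj)).
rewrite mulr_fsuml -fsumEFin; last exact: finite_finset.
apply: lee_fsum => [|j _]; first exact: finite_finset.
have -> : 2 * lambda / c j * x = lambda * (2 * x) / c j by ring.
apply: pinf_sublevel_le (c_ltx j) => //.
by rewrite !mulr_ge0 ?ltW.
Qed.
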